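(* Let $0<\epsilon<1$, $0<\rho<1$ and integers $n\ge k\ge 1$. If $\mathbf{A}$ is a random $n\times k$ binary matrix with the Bernoulli$(n,k,\rho)$ distribution, then \[ \mathbb{E}_{\mathbf{A}}\big(p_c(\mathbf{A})\big)\;\ge\;\sum_{i=0}^{n}\binom{n}{i}\frac{2^n\,\epsilon^{2i}(1-\epsilon)^{2(n-i)}}{\sum_{j=0}^{k}\binom{k}{j}\big(1-(1-2\epsilon)(1-2\rho)^j\big)^i\big(1+(1-2\epsilon)(1-2\rho)^j\big)^{n-i}}. \]
   Context: All arithmetic on binary vectors and matrices is in $\mathrm{GF}(2)$. A binary linear code with generating matrix $\mathbf{A}\in\{0,1\}^{n\times k}$ encodes a message $X\in\{0,1\}^k$ as $\mathbf{A}X\in\{0,1\}^n$. Over the binary symmetric channel (BSC) with cross-over probability $\epsilon$, the channel output is $Y=\mathbf{A}X+N$, where $X$ is uniformly distributed on $\{0,1\}^k$ and $N\in\{0,1\}^n$ has i.i.d. Bernoulli$(\epsilon)$ entries (equal to $1$ with probability $\epsilon$), independent of $X$. The decoder, on receiving $Y=y$, outputs a random estimate $\hat X$ drawn from the posterior distribution $\mathbb{P}(X=\cdot\mid Y=y)$. Its probability of correct detection is $p_c(\mathbf{A})=\sum_{x,y}\mathbb{P}(X=x,Y=y)\,\mathbb{P}(X=x\mid Y=y)=\mathbb{E}_{X,Y}\big[\mathbb{P}(X\mid Y)\big]$, and the error probability is $p_e(\mathbf{A})=1-p_c(\mathbf{A})$. The Bernoulli$(n,k,\rho)$ distribution on the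 set $\mathcal{A}_{n\times k}$ of all binary $n\times k$ matrices is the one in which all $nk$ entries are i.i.d. Bernoulli$(\rho)$. *)

From HB Require Import structures.
From mathcomp Require Import all_boot all_order all_algebra.
Set Implicit Arguments. Unset Strict Implicit. Unset Printing Implicit Defensive.
Import Order.TTheory GRing.Theory Num.Theory.
Local Open Scope ring_scope.

Section BSC.
Variable R : realFieldType.

Definition bern_vec (p : R) (m : nat) (v : 'cV['F_2]_m) : R :=
  \prod_(i < m) (if v i 0 == 0 then 1 - p else p).

Definition bern_mx (rho : R) (n k : nat) (A : 'M['F_2]_(n, k)) : R :=
  \prod_(i < n) \prod_(j < k) (if A i j == 0 then 1 - rho else rho).

(* joint law P(X = x, Y = y) with X uniform, Y = A X + N, N ~ Bern(eps)^n *)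
Definition joint (eps : R) (n k : nat) (A : 'M['F_2]_(n, k))
  (x : 'cV['F_2]_k) (y : 'cV['F_2]_n) : R :=
  (2 ^+ k)^-1 * bern_vec eps (y - A *m x).

Definition marg_Y (eps : R) (n k : nat) (A : 'M['F_2]_(n, k))
  (y : 'cV['F_2]_n) : R :=
  \sum_(x : 'cV['F_2]_k) joint eps A x y.

Definition posterior (eps : R) (n k : nat) (A : 'M['F_2]_(n, k))
  (x : 'cV['F_2]_k) (y : 'cV['F_2]_n) : R :=
  joint eps A x y / marg_Y eps A y.

(* probability of correct detection of the posterior-sampling decoder *)
Definition p_c (eps : R) (n k : nat) (A : 'M['F_2]_(n, k)) : R :=
  \sum_(x : 'cV['F_2]_k) \sum_(y : 'cV['F_2]_n)
     joint eps A x y * posterior eps A x y.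

Definition expected_pc (eps rho : R) (n k : nat) : R :=
  \sum_(A : 'M['F_2]_(n, k)) bern_mx rho A * p_c eps A.

Definition pc_lower_bound (eps rho : R) (n k : nat) : R :=
  \sum_(i < n.+1)
    'C(n, i)%:R * (2 ^+ n * eps ^+ (2 * i) * (1 - eps) ^+ (2 * (n - i)))
    / \sum_(j < k.+1) 'C(k, j)%:R
        * (1 - (1 - 2 * eps) * (1 - 2 * rho) ^+ j) ^+ i
        * (1 + (1 - 2 * eps) * (1 - 2 * rho) ^+ j) ^+ (n - i).

End BSC.

From HB Require Import structures.
From mathcomp Require Import all_boot all_order all_algebra ring.
Import Order.TTheory GRing.Theory Num.Theory.
Local Open Scope ring_scope.

(* Because the noise is additive, the posterior of the sent message depends on the
   received word only through its coset modulo the code, which gives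
   p_c(A) = sum_z P(N = z)^2 / sum_w P(N = z + A w).  Convexity of t |-> 1/t (Jensen)
   bounds E_A of each term below by P(N = z)^2 / E_A[sum_w P(N = z + A w)].  Writing
   P(N_i = b) = (1 + (1 - 2 eps) (-1)^b) / 2, the average over A factorises over the
   rows, and E[(-1)^(r . w)] = (1 - 2 rho)^|w| for a Bernoulli(rho) row r; grouping z
   and w by Hamming weight turns the bound into the binomial sums of the statement. *)

Set Implicit Arguments. Unset Strict Implicit. Unset Printing Implicit Defensive.

Lemma F2_cases (b : 'F_2) : b = 0 \/ b = 1.
Proof. by case: b => [[|[|m]] Hm] //; [left | right]; apply/val_inj. Qed.

Lemma sum_F2 (V : nmodType) (F : 'F_2 -> V) : \sum_b F b = F 0 + F 1.
Proof.
rewrite (bigD1 0) //= (bigD1 1) //= big1 ?addr0 // => b /andP[b0 b1].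
by case: (F2_cases b) b0 b1 => ->.
Qed.

Section SignCharacter.
Variable R : pzRingType.

Definition sign_F2 (b : 'F_2) : R := if b == 0 then 1 else -1.

Lemma sign_F2D (a b : 'F_2) : sign_F2 (a + b) = sign_F2 a * sign_F2 b.
Proof.
by case: (F2_cases a) => ->; case: (F2_cases b) => ->;
  rewrite /sign_F2 /= ?mulr1 ?mul1r ?mulrNN ?mulr1.
Qed.

Lemma sign_F2_sum (I : finType) (F : I -> 'F_2) :
  sign_F2 (\sum_i F i) = \prod_i sign_F2 (F i).
Proof. by apply: (big_morph sign_F2 sign_F2D); rewrite /sign_F2 eqxx. Qed.

End SignCharacter.

Section SumProd.
Variable R : comPzSemiRingType.

Lemma sum_cV_prod n (F : 'I_n -> 'F_2 -> R) :
  \sum_(v : 'cV['F_2]_n) \prod_i F i (v i 0) = \prod_i \sum_b F i b.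
Proof.
rewrite bigA_distr_bigA /= (reindex (fun v : 'cV['F_2]_n => [ffun i => v i 0])) /=.
  by apply: eq_bigr => v _; apply: eq_bigr => i _; rewrite ffunE.
exists (fun f : {ffun 'I_n -> 'F_2} => \col_i f i) => [v _ | f _].
  by apply/matrixP => i j; rewrite (ord1 j) mxE ffunE.
by apply/ffunP => i; rewrite !ffunE mxE.
Qed.

Lemma sum_mx_prod_row m n (G : 'I_m -> 'cV['F_2]_n -> R) :
  \sum_(A : 'M['F_2]_(m, n)) \prod_i G i (row i A)^T = \prod_i \sum_v G i v.
Proof.
rewrite bigA_distr_bigA /=.
rewrite (reindex (fun A : 'M['F_2]_(m, n) => [ffun i => (row i A)^T])) /=.
  by apply: eq_bigr => A _; apply: eq_bigr => i _; rewrite ffunE.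
exists (fun f : {ffun 'I_m -> 'cV['F_2]_n} => \matrix_(i, j) f i j 0) => [A _ | f _].
  by apply/matrixP => i j; rewrite !mxE ffunE !mxE.
by apply/ffunP => i; rewrite ffunE; apply/matrixP => j a; rewrite (ord1 a) !mxE.
Qed.

Definition hweight m (v : 'cV['F_2]_m) : nat := #|[set i | v i 0 != 0]|.

Lemma prod_hweight m (v : 'cV['F_2]_m) (a b : R) :
  \prod_i (if v i 0 == 0 then a else b) = a ^+ (m - hweight v) * b ^+ hweight v.
Proof.
rewrite (bigID (fun i => v i 0 == 0)) /=.
have -> : \prod_(i | v i 0 == 0) (if v i 0 == 0 then a else b)
   = \prod_(i in ~: [set i | v i 0 != 0]) a.
  by apply: eq_big => [i | i ->]; rewrite ?inE ?negbK.
have -> : \prod_(i | v i 0 != 0) (if v i 0 == 0 then a else b)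
   = \prod_(i in [set i | v i 0 != 0]) b.
  by apply: eq_big => [i | i /negbTE ->]; rewrite ?inE.
by rewrite !prodr_const cardsCs setCK card_ord.
Qed.

Lemma sum_hweight m (F : nat -> R) :
  \sum_(v : 'cV['F_2]_m) F (hweight v) = \sum_(i < m.+1) 'C(m, i)%:R * F i.
Proof.
pose indicator (S : {set 'I_m}) : 'cV['F_2]_m := \col_i (i \in S)%:R.
rewrite (reindex indicator) /=; last first.
  exists (fun v : 'cV['F_2]_m => [set i | v i 0 != 0]) => [S _ | v _].
    by apply/setP => i; rewrite inE mxE; case: (i \in S).
  apply/matrixP => i j; rewrite (ord1 j) mxE inE.
  by case: (F2_cases (v i 0)) => ->.
have hweight_indicator S : hweight (indicator S) = #|S|.
  by apply: eq_card => i; rewrite !inE mxE; case: (i \in S).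
under eq_bigr do rewrite hweight_indicator.
have card_lt (S : {set 'I_m}) : (#|S| < m.+1)%N.
  by rewrite ltnS; have := max_card (mem S); rewrite card_ord.
rewrite (partition_big (fun S : {set 'I_m} => inord #|S| : 'I_m.+1) predT) //=.
apply: eq_bigr => i _.
rewrite (eq_bigr (fun _ => F i)); last by move=> S /eqP <-; rewrite inordK.
rewrite sumr_const mulr_natl; congr (_ *+ _).
rewrite -[m in 'C(m, _)]card_ord -card_draws; apply: eq_card => S.
by rewrite !inE unfold_in /= inordK.
Qed.

End SumProd.

Section InverseConvexity.
Variable R : realFieldType.

Lemma inv_ge_tangent (m d : R) : 0 < m -> 0 < d -> (2 * m - d) / m ^+ 2 <= d^-1.
Proof.
move=> m_gt0 d_gt0.
rewrite ler_pdivrMr ?exprn_gt0 // mulrC ler_pdivlMl // -subr_ge0.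
have -> : m ^+ 2 - d * (m * 2 - d) = (m - d) ^+ 2 by rewrite sqrrB; ring.
exact: sqr_ge0.
Qed.

Lemma jensen_inv (I : finType) (p d : I -> R) :
  (forall i, 0 <= p i) -> (forall i, 0 < d i) -> \sum_i p i = 1 ->
  (\sum_i p i * d i)^-1 <= \sum_i p i / d i.
Proof.
move=> p_ge0 d_gt0 p_sum1; set m := \sum_i p i * d i.
have m_ge0 : 0 <= m by apply: sumr_ge0 => i _; rewrite mulr_ge0 ?(ltW (d_gt0 i)).
have [-> | m_neq0] := eqVneq m 0.
  by rewrite invr0; apply: sumr_ge0 => i _; rewrite mulr_ge0 ?invr_ge0 ?(ltW (d_gt0 i)).
have m_gt0 : 0 < m by rewrite lt_def m_neq0.
have -> : m^-1 = \sum_i p i * ((2 * m - d i) / m ^+ 2).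
  under eq_bigr do rewrite mulrA mulrBr.
  rewrite -mulr_suml sumrB -mulr_suml p_sum1 -/m; field; exact: m_neq0.
by apply: ler_sum => i _; apply: ler_wpM2l => //; apply: inv_ge_tangent.
Qed.

End InverseConvexity.

Section BernoulliLaws.
Variable R : realFieldType.

Definition bern (p : R) (b : 'F_2) : R := if b == 0 then 1 - p else p.

Lemma bern_vecE (p : R) m (v : 'cV['F_2]_m) : bern_vec p v = \prod_i bern p (v i 0).
Proof. by []. Qed.

Lemma bern_mxE (p : R) m n (A : 'M['F_2]_(m, n)) :
  bern_mx p A = \prod_i bern_vec p (row i A)^T.
Proof. by apply: eq_bigr => i _; apply: eq_bigr => j _; rewrite !mxE. Qed.

Lemma bern_sum1 (p : R) : \sum_b bern p b = 1.
Proof. by rewrite sum_F2 /bern /= subrK. Qed.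

Lemma bern_sign (p : R) (b : 'F_2) : bern p b = (1 + (1 - 2 * p) * sign_F2 R b) / 2.
Proof. by case: (F2_cases b) => ->; rewrite /bern /sign_F2 /=; field. Qed.

Lemma bern_vec_gt0 (p : R) m (v : 'cV['F_2]_m) : 0 < p -> p < 1 -> 0 < bern_vec p v.
Proof.
by move=> p_gt0 p_lt1; apply: prodr_gt0 => i _; rewrite /bern; case: ifP; rewrite ?subr_gt0.
Qed.

Lemma bern_mx_ge0 (p : R) m n (A : 'M['F_2]_(m, n)) : 0 <= p -> p <= 1 -> 0 <= bern_mx p A.
Proof.
by move=> p_ge0 p_le1; do 2!apply: prodr_ge0 => ? _; case: ifP; rewrite ?subr_ge0.
Qed.

Lemma bern_vec_sum1 (p : R) m : \sum_(v : 'cV['F_2]_m) bern_vec p v = 1.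
Proof. by rewrite (sum_cV_prod (fun=> bern p)) big1 // => i _; apply: bern_sum1. Qed.

Lemma bern_mx_sum1 (p : R) m n : \sum_(A : 'M['F_2]_(m, n)) bern_mx p A = 1.
Proof.
under eq_bigr do rewrite bern_mxE.
by rewrite (sum_mx_prod_row (fun _ v => bern_vec p v)) big1 // => i _; apply: bern_vec_sum1.
Qed.

Lemma mean_sign_dot (p : R) m (w : 'cV['F_2]_m) :
  \sum_(v : 'cV['F_2]_m) bern_vec p v * sign_F2 R (\sum_j v j 0 * w j 0)
  = (1 - 2 * p) ^+ hweight w.
Proof.
under eq_bigr do rewrite sign_F2_sum bern_vecE -big_split /=.
rewrite (sum_cV_prod (fun j b => bern p b * sign_F2 R (b * w j 0))).
have -> : (1 - 2 * p) ^+ hweight w = \prod_j (if w j 0 == 0 then 1 else 1 - 2 * p).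
  by rewrite prod_hweight expr1n mul1r.
apply: eq_bigr => j _.
by rewrite sum_F2 /bern /sign_F2 /= mul1r; case: ifP => _; ring.
Qed.

Lemma mean_bern_shift (eps rho : R) m (b : 'F_2) (w : 'cV['F_2]_m) :
  \sum_(v : 'cV['F_2]_m) bern_vec rho v * bern eps (b + \sum_j v j 0 * w j 0)
  = (1 + (1 - 2 * eps) * sign_F2 R b * (1 - 2 * rho) ^+ hweight w) / 2.
Proof.
under eq_bigr do
  rewrite bern_sign sign_F2D mulrA mulrDr mulrCA [_ * (sign_F2 R _ * _)]mulrCA.
rewrite -mulr_suml big_split /= -!mulr_sumr mean_sign_dot.
by under eq_bigr do rewrite mulr1; rewrite bern_vec_sum1 mulrA.
Qed.

End BernoulliLaws.

Section RandomCode.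
Variables (R : realFieldType) (eps rho : R) (n k : nat).

Lemma p_cE (A : 'M['F_2]_(n, k)) :
  p_c eps A = \sum_(z : 'cV['F_2]_n) bern_vec eps z ^+ 2
                / \sum_(w : 'cV['F_2]_k) bern_vec eps (z + A *m w).
Proof.
have two_k_neq0 : (2 ^+ k : R) != 0 by rewrite expf_neq0 // pnatr_eq0.
have inner x : \sum_(y : 'cV['F_2]_n) joint eps A x y * posterior eps A x y
   = (2 ^+ k)^-1 * \sum_(z : 'cV['F_2]_n) bern_vec eps z ^+ 2
                / \sum_(w : 'cV['F_2]_k) bern_vec eps (z + A *m w).
  rewrite (reindex_inj (addIr (A *m x))) /= mulr_sumr; apply: eq_bigr => z _.
  rewrite /posterior /marg_Y /joint addrK -mulr_sumr.
  rewrite (reindex_inj (can_inj (subKr x))) /=.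
  under eq_bigr do rewrite mulmxBr opprB addrA addrAC addrK.
  move: (bern_vec eps z) (\sum_w _) => b D.
  by rewrite invfM invrK; move: D^-1 => d; field.
rewrite /p_c; under eq_bigr do rewrite inner.
rewrite sumr_const card_mx card_Fp // muln1 -mulrnAl -[_ *+ 2 ^ k]mulr_natl.
by rewrite natrX mulfV ?mul1r.
Qed.

Lemma mean_bern_vec_shift (z : 'cV['F_2]_n) (w : 'cV['F_2]_k) :
  \sum_(A : 'M['F_2]_(n, k)) bern_mx rho A * bern_vec eps (z + A *m w)
  = ((1 + (1 - 2 * eps) * (1 - 2 * rho) ^+ hweight w) / 2) ^+ (n - hweight z)
    * ((1 - (1 - 2 * eps) * (1 - 2 * rho) ^+ hweight w) / 2) ^+ hweight z.
Proof.
pose G i (v : 'cV['F_2]_k) := bern_vec rho v * bern eps (z i 0 + \sum_j v j 0 * w j 0).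
transitivity (\sum_(A : 'M['F_2]_(n, k)) \prod_i G i (row i A)^T).
  apply: eq_bigr => A _; rewrite bern_mxE bern_vecE -big_split /=.
  by apply: eq_bigr => i _; rewrite /G !mxE; under [in RHS]eq_bigr do rewrite !mxE.
rewrite sum_mx_prod_row /G; under eq_bigr do rewrite mean_bern_shift.
rewrite -prod_hweight; apply: eq_bigr => i _.
by case: (F2_cases (z i 0)) => ->; rewrite /sign_F2 /= ?mulr1 // mulrN1 mulNr.
Qed.

Lemma mean_posterior_denominator (z : 'cV['F_2]_n) :
  \sum_(A : 'M['F_2]_(n, k)) bern_mx rho A
      * \sum_(w : 'cV['F_2]_k) bern_vec eps (z + A *m w)
  = \sum_(j < k.+1) 'C(k, j)%:R
      * (((1 + (1 - 2 * eps) * (1 - 2 * rho) ^+ j) / 2) ^+ (n - hweight z)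
         * ((1 - (1 - 2 * eps) * (1 - 2 * rho) ^+ j) / 2) ^+ hweight z).
Proof.
under eq_bigr do rewrite mulr_sumr.
rewrite exchange_big /=; under eq_bigr do rewrite mean_bern_vec_shift.
exact: (@sum_hweight R k (fun j =>
  ((1 + (1 - 2 * eps) * (1 - 2 * rho) ^+ j) / 2) ^+ (n - hweight z)
  * ((1 - (1 - 2 * eps) * (1 - 2 * rho) ^+ j) / 2) ^+ hweight z)).
Qed.

Lemma pc_lower_bound_hweight :
  pc_lower_bound eps rho n k
  = \sum_(z : 'cV['F_2]_n) bern_vec eps z ^+ 2
      / \sum_(j < k.+1) 'C(k, j)%:R
          * (((1 + (1 - 2 * eps) * (1 - 2 * rho) ^+ j) / 2) ^+ (n - hweight z)
             * ((1 - (1 - 2 * eps) * (1 - 2 * rho) ^+ j) / 2) ^+ hweight z).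
Proof.
set a := fun j : nat => 1 - (1 - 2 * eps) * (1 - 2 * rho) ^+ j.
set b := fun j : nat => 1 + (1 - 2 * eps) * (1 - 2 * rho) ^+ j.
under [RHS]eq_bigr do rewrite bern_vecE /bern prod_hweight.
rewrite (@sum_hweight R n (fun i => ((1 - eps) ^+ (n - i) * eps ^+ i) ^+ 2
   / \sum_(j < k.+1) 'C(k, j)%:R * ((b j / 2) ^+ (n - i) * (a j / 2) ^+ i))).
apply: eq_bigr => i _; have le_in : (i <= n)%N by rewrite -ltnS.
have -> : \sum_(j < k.+1) 'C(k, j)%:R * ((b j / 2) ^+ (n - i) * (a j / 2) ^+ i)
   = (\sum_(j < k.+1) 'C(k, j)%:R * a j ^+ i * b j ^+ (n - i)) / 2 ^+ n.
  rewrite mulr_suml; apply: eq_bigr => j _.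
  by rewrite !expr_div_n mulf_div -exprD subnK // [X in _ * (X / _)]mulrC !mulrA.
rewrite invf_div; set s := (\sum_(j < k.+1) _)^-1.
by rewrite exprMn -!exprM [(2 * i)%N]mulnC [(2 * (n - i))%N]mulnC; ring.
Qed.

Hypotheses (eps_gt0 : 0 < eps) (eps_lt1 : eps < 1).
Hypotheses (rho_ge0 : 0 <= rho) (rho_le1 : rho <= 1).

Lemma expected_pc_ge_inv_mean :
  \sum_(z : 'cV['F_2]_n) bern_vec eps z ^+ 2
      / \sum_(A : 'M['F_2]_(n, k)) bern_mx rho A
          * \sum_(w : 'cV['F_2]_k) bern_vec eps (z + A *m w)
  <= expected_pc eps rho n k.
Proof.
rewrite /expected_pc; under [X in _ <= X]eq_bigr do rewrite p_cE mulr_sumr.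
rewrite [X in _ <= X]exchange_big /=; apply: ler_sum => z _.
under [X in _ <= X]eq_bigr do rewrite mulrCA.
rewrite -mulr_sumr ler_wpM2l ?sqr_ge0 //.
apply: jensen_inv => [A | A |]; last exact: bern_mx_sum1.
- exact: bern_mx_ge0.
- rewrite (bigD1 0) //= mulmx0 addr0 ltr_pwDl ?bern_vec_gt0 //.
  by apply: sumr_ge0 => w _; apply/ltW/bern_vec_gt0.
Qed.

End RandomCode.

Unset Implicit Arguments.

Theorem theorem1 (R : realFieldType) (eps rho : R) (n k : nat)
  (heps0 : 0 < eps) (heps1 : eps < 1) (hrho0 : 0 < rho) (hrho1 : rho < 1)
  (hk : (1 <= k)%N) (hkn : (k <= n)%N) :
  pc_lower_bound eps rho n k <= expected_pc eps rho n k.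
Proof.
(* The bound holds for every k and n. *)
apply: le_trans (expected_pc_ge_inv_mean n k heps0 heps1 (ltW hrho0) (ltW hrho1)).
rewrite pc_lower_bound_hweight.
by under [X in _ <= X]eq_bigr do rewrite mean_posterior_denominator.
Qed.
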